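(* Every 2-regular graph $G=(V,E)$ on a finite vertex set $V$ with $|V|$ even is B-factorizable.
   Context: Let $V$ be a finite set with $|V|$ even. $K=\binom{V}{2}$ is the set of 2-element subsets of $V$. An equal partition of $V$ is an unordered pair $\{H,A\}$ of disjoint subsets with $H\cup A=V$ and $|H|=|A|=|V|/2$; $C=C(V)$ is the set of equal partitions. For $c=\{H,A\}\in C$, $B_c$ is the complete bipartite graph with parts $H$ and $A$. Vectors live in $\mathbb N^{K\cup C}$ with $\mathbb N=\{0,1,2,\dots\}$; $v|_K$ denotes the restriction to coordinates in $K$. For $E\subseteq K$, $\chi_E\in\{0,1\}^K$ is its indicator vector. For $E\subseteq K$ and $c\in C$, $\chi_{E,c}\in\mathbb N^{K\cup C}$ has $K$-components $\chi_E$ and $C$-components equal to the indicator of $c$. $PM(V)=\{\chi_{q,c}: c\in C,\ q\text{ a perfect matching of }B_c\}$. For $\mathcal M\subseteq\mathbb N^{K\cup C}$, $\mathbf N(\mathcal M)$ is the set of finite nonnegative integer combinations of elements of $\mathcal M$, and $\overline{\mathbf N}(\mathcal M)=\{v\in\mathbb N^{K\cup C}: kv\in\mathbf N(\mathcal M)\text{ for some integer }k\ge1\}$. A regular graph $G=(V,E)$ is B-factorizable if every $v\in\overline{\mathbf N}(PM(V))$ with $v|_K=\chi_E$ belongs to $\mathbf N(PM(V))$. *)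

From mathcomp Require Import all_boot.
Set Implicit Arguments. Unset Strict Implicit. Unset Printing Implicit Defensive.

Section Defs.
Variable V : finType.

Definition Kset := {e : {set V} | #|e| == 2}.

Definition isEqPart (c : {set {set V}}) : bool :=
  [exists H : {set V}, exists A : {set V},
     [&& c == [set H; A], [disjoint H & A], H :|: A == setT & #|H| == #|A|]].

Definition Cset := {c : {set {set V}} | isEqPart c}.

(* coordinates K ∪ C and vectors in N^(K ∪ C) *)
Definition coord := (Kset + Cset)%type.
Definition vec := coord -> nat.

Definition edgeB (c : Cset) (e : Kset) : Prop :=
  exists (H A : {set V}) (x y : V),
    val c = [set H; A] /\ [disjoint H & A] /\ H :|: A = setT /\ #|H| = #|A| /\
    x \in H /\ y \in A /\ val e = [set x; y].

Definition perfect_matching (c : Cset) (q : {set Kset}) : Prop :=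
  (forall e, e \in q -> edgeB c e) /\
  (forall x : V, #|[set e in q | x \in val e]| = 1).

Definition chiEc (E : {set Kset}) (c : Cset) : vec :=
  fun j => match j with
           | inl e => nat_of_bool (e \in E)
           | inr c' => nat_of_bool (c' == c)
           end.

Definition PM (v : vec) : Prop :=
  exists (c : Cset) (q : {set Kset}), perfect_matching c q /\ v = chiEc q c.

Definition Ncomb (M : vec -> Prop) (v : vec) : Prop :=
  exists (n : nat) (f : 'I_n -> vec),
    (forall i, M (f i)) /\ forall j, v j = \sum_(i < n) f i j.

Definition Nbar (M : vec -> Prop) (v : vec) : Prop :=
  exists k : nat, 1 <= k /\ Ncomb M (fun j => k * v j).

Definition deg (E : {set Kset}) (x : V) : nat := #|[set e in E | x \in val e]|.
Definition regular_of (r : nat) (E : {set Kset}) : Prop := forall x, deg E x = r.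
Definition regular (E : {set Kset}) : Prop := exists r, regular_of r E.

Definition B_factorizable (E : {set Kset}) : Prop :=
  regular E /\
  forall v : vec, Nbar PM v -> (forall e : Kset, v (inl e) = nat_of_bool (e \in E)) ->
    Ncomb PM v.
End Defs.

From mathcomp Require Import all_boot.
Set Implicit Arguments. Unset Strict Implicit. Unset Printing Implicit Defensive.

(* Let v be a vector with v|_K = chi_E and k v = sum_(i < n) chi_(q_i, c_i)
   for perfect matchings q_i of B_(c_i), with k >= 1.  Counting, at a vertex
   x, the pairs (i, e) with x in e in q_i gives n = 2k, since every q_i covers
   x once and E covers it twice; counting the C-coordinates then shows that
   the C-part of v sums to 2, i.e. it is e_(c1) + e_(c2) with c1 = c_(i0).
   The matching q = q_(i0) lies inside E, so E \ q is again a perfect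
   matching, and a multiplicity count shows that all its edges lie in B_(c2).
   Hence v = chi_(q, c1) + chi_(E \ q, c2).  The empty vertex set, where no
   vertex is available for the count, is handled separately. *)

Lemma Ncomb_scale (V : finType) (M : vec V -> Prop) (u w : vec V) (m : nat) :
  M u -> (forall j, w j = m * u j) -> Ncomb M w.
Proof.
move=> Mu wE; exists m, (fun _ => u); split=> // j.
by rewrite wE sum_nat_const card_ord.
Qed.

Lemma Ncomb_add2 (V : finType) (M : vec V -> Prop) (u u' w : vec V) :
  M u -> M u' -> (forall j, w j = u j + u' j) -> Ncomb M w.
Proof.
move=> Mu Mu' wE; exists 2, (fun i : 'I_2 => if val i == 0 then u else u').
split=> [i | j]; first by case: ifP.
by rewrite wE big_ord_recr big_ord_recr big_ord0.
Qed.

Lemma Ncomb_PM_inv (V : finType) (w : vec V) : Ncomb (@PM V) w ->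
  exists n (cc : 'I_n -> Cset V) (qq : 'I_n -> {set Kset V}),
    (forall i, perfect_matching (cc i) (qq i)) /\
    forall j, w j = \sum_(i < n) chiEc (qq i) (cc i) j.
Proof.
move=> [n [f [PMf wE]]].
have /fin_all_exists [g gP] : forall i : 'I_n, exists p : Cset V * {set Kset V},
    perfect_matching p.1 p.2 /\ f i = chiEc p.2 p.1.
  by move=> i; have [c [q [PMq ->]]] := PMf i; exists (c, q).
exists n, (fun i => (g i).1), (fun i => (g i).2); split=> [i | j].
  by case: (gP i).
by rewrite wE; apply: eq_bigr => i _; case: (gP i) => _ ->.
Qed.

Lemma sum_nat_eq2 (T : finType) (f : T -> nat) (a : T) :
  \sum_t f t = 2 -> 0 < f a -> exists b, forall t, f t = (t == a) + (t == b).
Proof.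
rewrite (bigD1 a) //=; set rest := \sum_(t | t != a) f t => fa_rest fa_gt0.
have [[fa2 rest0] | [fa1 rest1]] : f a = 2 /\ rest = 0 \/ f a = 1 /\ rest = 1.
  by move: fa_rest fa_gt0; case: (f a) => [|[|[|m]]] //; case: rest => [|[|r]]; auto.
- exists a => t; case: (eqVneq t a) => [-> // | ta].
  by move/eqP: rest0; rewrite sum_nat_eq0 => /forallP /(_ t); rewrite ta => /eqP.
- have /eqP/sum_nat_eq1 [b [ba fb1 fb0]] := rest1.
  exists b => t; case: (eqVneq t a) => [-> | ta].
    by rewrite eq_sym (negbTE ba) fa1.
  by case: (eqVneq t b) => [-> | tb] //; rewrite fb0.
Qed.

Section Degrees.
Variable V : finType.
Implicit Types (F G : {set Kset V}) (x : V).

Lemma deg_sum F x : deg F x = \sum_e ((e \in F) && (x \in val e)).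
Proof.
rewrite /deg -sum1_card big_mkcond /=.
by apply: eq_bigr => e _; rewrite inE; case: (_ && _).
Qed.

Lemma deg_setD F G x : G \subset F -> deg (F :\: G) x = deg F x - deg G x.
Proof.
move=> sGF; rewrite /deg -(setIidPr (_ : [set e in G | x \in val e] \subset
                                        [set e in F | x \in val e])).
  rewrite -cardsD; apply: eq_card => e; rewrite !inE.
  by case: (e \in G); case: (e \in F); case: (x \in val e).
apply/subsetP => e; rewrite !inE => /andP [eG ->].
by rewrite (subsetP sGF e eG).
Qed.

End Degrees.

(* On the empty vertex set there are no pairs and a single equal partition
   {set0, set0}, so every vector is a multiple of chi_(set0, {set0, set0}). *)
Section EmptyVertexSet.
Variable V : finType.
Hypothesis V0 : #|V| = 0.

Lemma set_empty (S : {set V}) : S = set0.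
Proof. by apply/setP => y; have := card0_eq V0 y. Qed.

Lemma no_pair : Kset V -> False.
Proof. by case=> e; rewrite (set_empty e) cards0. Qed.

Lemma isEqPart_trivial : isEqPart [set (set0 : {set V}); set0].
Proof.
apply/existsP; exists set0; apply/existsP; exists set0.
by rewrite eqxx -setI_eq0 setI0 setU0 eq_sym (set_empty setT) !eqxx.
Qed.

Definition trivial_part : Cset V := Sub _ isEqPart_trivial.

Lemma part_unique (c : Cset V) : c = trivial_part.
Proof.
apply: val_inj; case/existsP: (valP c) => H /existsP [A /and4P [/eqP -> _ _ _]].
by rewrite (set_empty H) (set_empty A).
Qed.

Lemma PM_empty_vertex_set (v : vec V) : Ncomb (@PM V) v.
Proof.
apply: (@Ncomb_scale _ _ (chiEc set0 trivial_part) _ (v (inr trivial_part))).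
  exists trivial_part, set0; split=> //; split=> [e | y].
    by rewrite in_set0.
  by have := card0_eq V0 y.
case=> [e | c]; first by case: (no_pair e).
by rewrite /= (part_unique c) eqxx muln1.
Qed.

End EmptyVertexSet.

Section Decomposition.
Variables (V : finType) (E : {set Kset V}) (v : vec V) (k n : nat).
Variables (cc : 'I_n -> Cset V) (qq : 'I_n -> {set Kset V}).
Hypothesis matching_i : forall i, perfect_matching (cc i) (qq i).
Hypothesis decomp : forall j, k * v j = \sum_(i < n) chiEc (qq i) (cc i) j.
Hypothesis vK : forall e, v (inl e) = (e \in E).

Lemma edge_multiplicity e : \sum_i (e \in qq i) = k * (e \in E).
Proof. by rewrite -vK decomp. Qed.

Lemma part_multiplicity c : \sum_i (c == cc i) = k * v (inr c).
Proof. by rewrite decomp. Qed.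

Lemma matching_subset i : qq i \subset E.
Proof.
apply/subsetP => e e_qi; move: (edge_multiplicity e).
by rewrite (bigD1 i) //= e_qi; case: (e \in E); rewrite ?muln0.
Qed.

Lemma part_support i : 0 < v (inr (cc i)).
Proof.
rewrite lt0n; apply/eqP => v0; move: (part_multiplicity (cc i)).
by rewrite v0 muln0 (bigD1 i) //= eqxx.
Qed.

(* Double counting at a vertex x: each q_i covers x once, and E covers x
   r times, each edge of E being used by exactly k of the q_i. *)
Lemma count_matchings r (x : V) : regular_of r E -> n = r * k.
Proof.
move=> regE.
have -> : n = \sum_i deg (qq i) x.
  rewrite (eq_bigr (fun=> 1)) ?sum1_card ?card_ord // => i _.
  exact: (matching_i i).2.
rewrite -(regE x) deg_sum big_distrl /=.
under eq_bigr do rewrite deg_sum.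
rewrite exchange_big /=; apply: eq_bigr => e _.
rewrite -mulnb mulnC mulnA -edge_multiplicity big_distrl /=.
by apply: eq_bigr => i _; rewrite mulnb.
Qed.

Lemma sum_parts r (x : V) : 0 < k -> regular_of r E -> \sum_c v (inr c) = r.
Proof.
move=> k_gt0 regE; apply/eqP; rewrite -(eqn_pmul2l k_gt0) big_distrr /=.
under eq_bigr do rewrite -part_multiplicity.
rewrite exchange_big /= mulnC -(count_matchings x regE).
rewrite -[X in _ == X]card_ord -sum1_card; apply/eqP; apply: eq_bigr => i _.
by rewrite (bigD1 (cc i)) //= eqxx big1 // => c /negbTE ->.
Qed.

(* If the C-part of v is e_(c_(i0)) + e_(c2), every edge of E outside q_(i0)
   is an edge of B_(c2): otherwise each of the k matchings containing it
   would use c_(i0), and c_(i0) is used only k times, once by q_(i0). *)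
Lemma complement_edge i0 c2 e : 0 < k ->
  (forall c, v (inr c) = (c == cc i0) + (c == c2)) ->
  e \in E :\: qq i0 -> edgeB c2 e.
Proof.
move=> k_gt0 two_parts; rewrite inE => /andP [e_nq0 eE].
case: (boolP [exists i, (e \in qq i) && (cc i == c2)]).
  by case/existsP=> i /andP [e_qi /eqP <-]; exact: (matching_i i).1.
move/existsPn=> no_c2.
have in_c1 i : e \in qq i -> (cc i0 == cc i) && (cc i0 != c2).
  move=> e_qi; have := no_c2 i; rewrite e_qi /= => /negbTE ci_c2.
  have := part_support i; rewrite two_parts ci_c2 addn0 lt0b eq_sym => /eqP ci.
  by rewrite ci eqxx ci_c2.
have k_le : k <= \sum_(i | i != i0) ((cc i0 == cc i) && (cc i0 != c2)).
  have := edge_multiplicity e; rewrite eE muln1 => <-.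
  rewrite [X in _ <= X]big_mkcond; apply: leq_sum => i _.
  case: (eqVneq i i0) => [-> | _]; first by rewrite (negbTE e_nq0).
  by case e_qi: (e \in qq i) => //; rewrite (in_c1 i e_qi).
case: (eqVneq (cc i0) c2) => [c1_c2 | c1_c2].
  rewrite big1 in k_le => [|i _]; last by rewrite c1_c2 eqxx andbF.
  by rewrite leqNgt k_gt0 in k_le.
have sum_k : \sum_i (cc i0 == cc i) = k.
  by rewrite part_multiplicity two_parts eqxx (negbTE c1_c2) muln1.
move: k_le; rewrite -{1}sum_k (bigD1 i0) //= eqxx.
by under [X in _ <= X]eq_bigr do rewrite c1_c2 andbT; rewrite add1n ltnn.
Qed.

End Decomposition.

Theorem mainTheorem7 (V : finType) (hV : ~~ odd #|V|) (E : {set Kset V}) :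
  regular_of 2 E -> B_factorizable E.
Proof.
move=> regE; split; first by exists 2.
move=> v [k [k_gt0 /Ncomb_PM_inv [n [cc [qq [matching_i decomp]]]]]] vK.
have [V0 | /card_gt0P [x _]] := posnP #|V|; first exact: PM_empty_vertex_set.
have n_gt0 : 0 < n by rewrite (count_matchings matching_i decomp vK x regE) muln_gt0.
pose i0 := Ordinal n_gt0; pose q := qq i0.
have [c2 two_parts] := sum_nat_eq2 (sum_parts matching_i decomp vK x k_gt0 regE)
                                   (part_support decomp i0).
have qE : q \subset E := matching_subset decomp vK i0.
apply: (@Ncomb_add2 _ _ (chiEc q (cc i0)) (chiEc (E :\: q) c2)).
- by exists (cc i0), q.
- exists c2, (E :\: q); split=> //; split=> [e | y].
    exact: complement_edge matching_i decomp vK i0 c2 e k_gt0 two_parts.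
  by rewrite -/(deg _ y) deg_setD // regE [deg q y](matching_i i0).2.
- case=> [e | c] /=; last by rewrite two_parts.
  rewrite vK inE; case e_q: (e \in q) => /=; first by rewrite (subsetP qE e e_q).
  by case: (e \in E).
Qed.
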